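(* A metrizable abelian topological group $G$ is NSS if and only if every absolutely Cauchy summable subset of $G$ is finite.
   Context: A topological group is NSS if it has a neighbourhood of the identity containing no non-trivial subgroup. A subset $A\subseteq G$ is absolutely Cauchy summable if for every neighbourhood $U$ of $0$ there is a finite $F\subseteq A$ such that the subgroup generated by $A\setminus F$ is contained in $U$. *)

From HB Require Import structures.
From mathcomp Require Import all_boot all_order all_algebra.
From mathcomp Require Import all_classical all_reals all_analysis.
From mathcomp Require Import Rstruct Rstruct_topology.
From Stdlib Require Import Rdefinitions.
Set Implicit Arguments. Unset Strict Implicit. Unset Printing Implicit Defensive.
Import Order.TTheory GRing.Theory Num.Theory.
Local Open Scope classical_set_scope.
Local Open Scope ring_scope.

Definition is_subgroup (G : zmodType) (H : set G) : Prop :=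
  H 0 /\ (forall x y, H x -> H y -> H (x - y)).

Definition gen_subgroup (G : zmodType) (A : set G) : set G :=
  [set x | forall H : set G, is_subgroup H -> A `<=` H -> H x].

Definition NSS (G : topologicalZmodType) : Prop :=
  exists U : set G, nbhs (0 : G) U /\
    forall H : set G, is_subgroup H -> H `<=` U -> H = [set 0].

Definition abs_cauchy_summable (G : topologicalZmodType) (A : set G) : Prop :=
  forall U : set G, nbhs (0 : G) U ->
    exists F : set G, [/\ finite_set F, F `<=` A & gen_subgroup (A `\` F) `<=` U].

Definition metrizable (T : topologicalType) : Prop :=
  exists d : T -> T -> R,
    [/\ forall x y, d x y = 0 <-> x = y,
        forall x y, d x y = d y x,
        forall x y z, d x z <= d x y + d y z
      & forall (x : T) (U : set T),
          nbhs x U <-> exists2 e : R, 0 < e & [set y | d x y < e] `<=` U].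

(* If U witnesses NSS and A is absolutely Cauchy summable, then for some
   finite F the subgroup generated by A \ F lies in U, hence is trivial, so
   A lies in F `|` [set 0].  Conversely, if G is not NSS, the metric gives a
   countable basis W n of neighbourhoods of 0 with W (n+1) + W (n+1) <= W n,
   and each W n contains the cyclic group of some x n <> 0.  Any finite sum of
   elements of these cyclic groups with indices > k lies in W k, so the set of
   all x n is absolutely Cauchy summable; it is infinite because x n tends to
   0 without ever being 0. *)

From mathcomp Require Import all_boot all_order all_algebra.
From mathcomp Require Import all_classical all_reals all_analysis.
From mathcomp Require Import Rstruct Rstruct_topology.
From Stdlib Require Import Rdefinitions.
From mathcomp Require Import finmap.
Import Order.TTheory GRing.Theory Num.Theory.
Local Open Scope classical_set_scope.
Local Open Scope ring_scope.

Section GeneratedSubgroup.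
Context {G : zmodType}.

Lemma subgroup_gen_subgroup (A : set G) : is_subgroup (gen_subgroup A).
Proof.
split=> [H [] //|x y Ax Ay H Hs AH].
exact: Hs.2 (Ax H Hs AH) (Ay H Hs AH).
Qed.

Lemma sub_gen_subgroup (A : set G) : A `<=` gen_subgroup A.
Proof. by move=> x Ax H _; apply. Qed.

Lemma gen_subgroup_min (A H : set G) :
  is_subgroup H -> A `<=` H -> gen_subgroup A `<=` H.
Proof. by move=> Hs AH x; apply. Qed.

End GeneratedSubgroup.

Section TailSums.
Context {G : zmodType} (H : nat -> set G).
Hypothesis subgroupH : forall n, is_subgroup (H n).

(* [block_sums m k] is the sumset H (k+1) + ... + H (k+m). *)
Fixpoint block_sums (m k : nat) : set G :=
  if m is m'.+1 then [set a + b | a in H k.+1 & b in block_sums m' k.+1]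
  else [set 0].

Lemma block_sums0 m k : block_sums m k 0.
Proof.
elim: m k => [//|m IHm] k /=; exists 0; first exact: (subgroupH _).1.
by exists 0; rewrite ?addr0.
Qed.

Lemma block_sumsB m k x y :
  block_sums m k x -> block_sums m k y -> block_sums m k (x - y).
Proof.
elim: m k x y => [|m IHm] k x y /=; first by move=> -> ->; rewrite subr0.
move=> [a Ha [b Pb <-]] [a' Ha' [b' Pb' <-]].
exists (a - a'); first exact: (subgroupH _).2.
by exists (b - b'); [exact: IHm | rewrite opprD addrACA].
Qed.

Lemma block_sums_succ m k : block_sums m k `<=` block_sums m.+1 k.
Proof.
elim: m k => [|m IHm] k x /=.
  by move=> ->; exists 0; [exact: (subgroupH _).1 | exists 0; rewrite ?addr0].
by move=> [a Ha [b Pb <-]]; exists a => //; exists b => //; exact: IHm.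
Qed.

Lemma block_sums_le k m n : (m <= n)%nat -> block_sums m k `<=` block_sums n k.
Proof.
move: m n; apply: (homo_leq (r := fun A B => A `<=` B)) => [A|B A C|m].
- exact: subset_refl.
- exact: subset_trans.
- exact: block_sums_succ.
Qed.

Lemma sub_block_sums j k : H (j + k).+1 `<=` block_sums j.+1 k.
Proof.
elim: j k => [|j IHj] k x Hx /=.
  by exists x => //; exists 0; rewrite ?addr0.
exists 0; first exact: (subgroupH _).1.
by exists x; [apply: IHj; rewrite addnS -addSn | rewrite add0r].
Qed.

Definition tail_sums k : set G := \bigcup_m block_sums m k.

Lemma subgroup_tail_sums k : is_subgroup (tail_sums k).
Proof.
split; first by exists 0%N => //; exact: block_sums0.
move=> x y [m _ Px] [n _ Py]; exists (maxn m n) => //.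
apply: block_sumsB; first exact: block_sums_le (leq_maxl m n) _ Px.
exact: block_sums_le (leq_maxr m n) _ Py.
Qed.

Lemma sub_tail_sums k n : (k < n)%nat -> H n `<=` tail_sums k.
Proof.
move=> kn x Hx; exists (n - k.+1).+1 => //.
by apply: sub_block_sums; rewrite -addnS subnK.
Qed.

Variable W : nat -> set G.
Hypotheses (W0 : forall n, W n 0) (HW : forall n, H n `<=` W n).
Hypothesis WD : forall n a b, W n.+1 a -> W n.+1 b -> W n (a + b).

Lemma tail_sums_sub k : tail_sums k `<=` W k.
Proof.
move=> x [m _]; elim: m k x => [|m IHm] k x /=; first by move=> ->.
by move=> [a Ha [b Pb <-]]; apply: WD; [exact: HW | exact: IHm].
Qed.

Lemma gen_subgroup_tail_sub k (A : set G) :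
  A `<=` \bigcup_(n in [set n | (k < n)%nat]) H n -> gen_subgroup A `<=` W k.
Proof.
move=> AH; apply: subset_trans (tail_sums_sub k).
apply: gen_subgroup_min; first exact: subgroup_tail_sums.
by move=> a /AH [n kn Hna]; exact: sub_tail_sums kn _ Hna.
Qed.

End TailSums.

Lemma nbhs0_halve {G : topologicalZmodType} (V : set G) : nbhs 0 V ->
  exists2 W : set G, nbhs 0 W & forall a b, W a -> W b -> V (a + b).
Proof.
move=> V0; have := @add_continuous G (0, 0); rewrite /continuous_at /= addr0.
move=> /(_ V V0) [[A B] /= [A0 B0] AB].
exists (A `&` B); first exact: filterI.
by move=> a b [Aa _] [_ Bb]; exact: (AB (a, b)).
Qed.

Lemma nbhs0_halving_sequence {G : topologicalZmodType} (D : nat -> set G) :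
  (forall n, nbhs 0 (D n)) ->
  exists W : nat -> set G, [/\ forall n, nbhs 0 (W n), forall n, W n `<=` D n
    & forall n a b, W n.+1 a -> W n.+1 b -> W n (a + b)].
Proof.
move=> D0.
have /choice [half halfP] : forall V : set G, exists W : set G, nbhs 0 V ->
    nbhs 0 W /\ forall a b, W a -> W b -> V (a + b).
  move=> V; have [/nbhs0_halve [W W0 WV]|nV0] := pselect (nbhs 0 V).
    by exists W.
  by exists setT => /nV0.
pose fix W n := if n is m.+1 then half (W m `&` D n) else D 0%nat.
have WP n : nbhs 0 (W n) /\ W n `<=` D n.
  elim: n => [|n [Wn0 _]]; first by split; [exact: D0|].
  have [halfW0 halfW] := halfP _ (filterI Wn0 (D0 n.+1)).
  split => // a Wa; have [] := halfW a 0 Wa (nbhs_singleton halfW0).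
  by rewrite addr0.
exists W; split=> [n|n|n a b Wa Wb]; [exact: (WP n).1 | exact: (WP n).2 |].
by have [_ /(_ a b Wa Wb) []] := halfP _ (filterI (WP n).1 (D0 n.+1)).
Qed.

Lemma metrizable_countable_nbhs_basis {T : topologicalType} (x : T) :
  metrizable T ->
  exists D : nat -> set T, [/\ forall n, nbhs x (D n),
    forall U, nbhs x U -> exists k, D k `<=` U
    & forall a, a <> x -> exists k, ~ D k a].
Proof.
move=> [d [d0 dC dtri dnbhs]].
have dpos a : a <> x -> 0 < d x a.
  move=> ax; rewrite lt_def; apply/andP; split.
    by apply/eqP => /d0 /esym /ax.
  have := dtri x a x; rewrite (dC a x) (proj2 (d0 x x) erefl) -mulr2n.
  by rewrite pmulrn_lge0.
exists (fun n => [set y | d x y < n.+1%:R^-1]); split.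
- by move=> n; apply/dnbhs; exists n.+1%:R^-1.
- move=> U /dnbhs [e e0 eU]; have [k] := ltr_add_invr e0; rewrite add0r => ke.
  by exists k => y /= xy; apply: eU; exact: lt_trans xy ke.
- move=> a /dpos /ltr_add_invr [k]; rewrite add0r => ka.
  by exists k => /=; apply/negP; rewrite -leNgt ltW.
Qed.

Lemma nbhs0_halving_basis {G : topologicalZmodType} : metrizable G ->
  exists W : nat -> set G, [/\ forall n, nbhs 0 (W n),
    forall n a b, W n.+1 a -> W n.+1 b -> W n (a + b),
    forall U, nbhs 0 U -> exists k, W k `<=` U
    & forall a, a <> 0 -> exists k, ~ W k a].
Proof.
move=> /(metrizable_countable_nbhs_basis 0) [D [D0 Dbasis Dsep]].
have [W [W0 WsubD Whalf]] := nbhs0_halving_sequence _ D0.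
exists W; split => // [U /Dbasis [k DU]|a /Dsep [k Dka]].
  by exists k; apply: subset_trans DU.
by exists k => /WsubD.
Qed.

Lemma finite_set_eventually_outside {T : choiceType} (W : nat -> set T)
    (X : set T) :
  (forall n, W n.+1 `<=` W n) -> (forall a, X a -> exists k, ~ W k a) ->
  finite_set X -> \forall n \near \oo, forall a, X a -> ~ W n a.
Proof.
move=> Wdec Xout /finite_fsetP [D XD].
have Wle : {homo W : m n / (m <= n)%nat >-> n `<=` m}.
  apply: (homo_leq (r := fun A B => B `<=` A)) => [A|B A C AB BC|//].
  - exact: subset_refl.
  - exact: subset_trans BC AB.
have : \forall n \near \oo, (\bigcap_(a in [set` D]) [set n | ~ W n a]) n.
  apply: filter_bigI => a aD.
  have [k Wka] : exists k, ~ W k a by apply: Xout; rewrite XD.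
  by exists k => // n /= kn /(Wle _ _ kn).
by apply: filterS => n Dn a; rewrite XD => /Dn.
Qed.

Lemma NSS_abs_cauchy_summable_finite {G : topologicalZmodType} (A : set G) :
  NSS G -> abs_cauchy_summable A -> finite_set A.
Proof.
move=> [U [U0 NSS_U]] /(_ U U0) [F [Ffin _ genU]].
have gen0 := NSS_U _ (subgroup_gen_subgroup (A `\` F)) genU.
apply: (@sub_finite_set _ _ (F `|` [set 0])); last by rewrite finite_setU.
move=> x Ax; have [Fx|nFx] := pselect (F x); [by left | right].
by rewrite -gen0; apply: sub_gen_subgroup.
Qed.

Lemma not_NSS_small_cyclic {G : topologicalZmodType} (V : set G) :
  ~ NSS G -> nbhs 0 V -> exists2 x : G, x <> 0 & gen_subgroup [set x] `<=` V.
Proof.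
move=> nNSS V0; apply: contrapT => noV; apply: nNSS.
exists V; split => // H Hs HV.
apply/seteqP; split => [x Hx|_ ->]; last exact: Hs.1.
apply: contrapT => x0; apply: noV; exists x => //.
by apply: subset_trans HV; apply: gen_subgroup_min => // _ ->.
Qed.

Lemma not_NSS_infinite_abs_cauchy_summable {G : topologicalZmodType} :
  metrizable G -> ~ NSS G ->
  exists2 A : set G, abs_cauchy_summable A & infinite_set A.
Proof.
move=> /nbhs0_halving_basis [W [W0 WD Wbasis Wsep]] nNSS.
have /choice [x xP] : forall n, exists x : G,
    x <> 0 /\ gen_subgroup [set x] `<=` W n.
  by move=> n; have [x] := not_NSS_small_cyclic _ nNSS (W0 n); exists x.
have Wx n : W n (x n) by apply: (xP n).2; exact: sub_gen_subgroup.
exists (range x).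
  move=> U /Wbasis [k WU]; exists (x @` `I_k.+1); split.
  - exact/finite_image/finite_II.
  - by move=> _ [n _ <-]; exists n.
  - apply: subset_trans WU.
    apply: (gen_subgroup_tail_sub _ (fun n => subgroup_gen_subgroup [set x n])
      _ (fun n => nbhs_singleton (W0 n)) (fun n => (xP n).2) WD).
    move=> _ [[n _ <-] nF]; exists n; last exact: sub_gen_subgroup.
    by rewrite /= ltnNge; apply/negP => nk; apply: nF; exists n.
have Wdec n : W n.+1 `<=` W n.
  by move=> a Wa; rewrite -[a]addr0; apply: WD => //; exact: nbhs_singleton.
have xout a : range x a -> exists k, ~ W k a.
  by move=> [n _ <-]; apply: Wsep; exact: (xP n).1.
move=> /(finite_set_eventually_outside _ _ Wdec xout) [N _ /(_ N (leqnn N))].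
by apply; [exists N | exact: Wx].
Qed.

Theorem theorem8p1 (G : topologicalZmodType) (hG : metrizable G) :
  NSS G <-> (forall A : set G, abs_cauchy_summable A -> finite_set A).
Proof.
split=> [NSS_G A|summable_finite]; first exact: NSS_abs_cauchy_summable_finite.
apply: contrapT => nNSS.
by have [A /summable_finite] := not_NSS_infinite_abs_cauchy_summable hG nNSS.
Qed.
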